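(* Let $x\in\widetilde W$, $v\in\mathrm{LP}(x)$ and $(\alpha,k)\in\Delta_{\mathrm{af}}$ with $\ell(x,\alpha)=0$. If $v^{-1}\alpha\in\Phi^+$, then $s_\alpha v\in\mathrm{LP}(x)$.
   Context: Let $\Phi$ be a reduced crystallographic finite root system with fixed basis $\Delta$, positive roots $\Phi^+$, negative roots $\Phi^-=-\Phi^+$, Weyl group $W$. For $\alpha\in\Phi$, $\alpha^\vee$ is its coroot and $s_\alpha$ its reflection. Let $X_*$ be an abelian group containing $\mathbb Z\Phi^\vee$, with a bilinear pairing $\langle\cdot,\cdot\rangle:X_*\times\mathbb Z\Phi\to\mathbb Z$ extending the coroot–root pairing; $W$ acts by $s_\alpha(\mu)=\mu-\langle\mu,\alpha\rangle\alpha^\vee$. $\Phi^+(\alpha)=1$ if $\alpha\in\Phi^+$, $0$ otherwise. $\widetilde W=W\ltimes X_*$ with elements $w\varepsilon^\mu$. The set of simple affine roots is $\Delta_{\mathrm{af}}=\{(\alpha,0):\alpha\in\Delta\}\cup\{(-\theta,1):\theta\text{ the highest root of an irreducible component of }\Phi\}$. For $x=w\varepsilon^\mu$ and $\alpha\in\Phi$, $\ell(x,\alpha)=\langle\mu,\alpha\rangle+\Phi^+(\alpha)-\Phi^+(w\alpha)$, and $\mathrm{LP}(x)=\{v\in W:\ell(x,v\alpha)\ge0\ \forall\alpha\in\Phi^+\}$. *)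

From HB Require Import structures.
From mathcomp Require Import all_boot all_order all_algebra.
From Stdlib Require Import ClassicalDescription.
Set Implicit Arguments. Unset Strict Implicit. Unset Printing Implicit Defensive.
Import Order.TTheory GRing.Theory Num.Theory.
Local Open Scope ring_scope.

Section RootSystems.
Variables (R : realFieldType) (n : nat).
Notation V := 'rV[R]_n.

Definition dot (u v : V) : R := (u *m v^T) 0 0.

Definition cartan (b a : V) : R := 2 * dot b a / dot a a.

Definition coroot (a : V) : V := (2 / dot a a) *: a.

(* matrix of the reflection s_a, acting on row vectors by v |-> v *m refl a,
   i.e. v |-> v - <v,a^vee> a *)
Definition refl (a : V) : 'M[R]_n := 1%:M - (2 / dot a a) *: (a^T *m a).

Definition root_system (Phi : seq V) : Prop :=
  [/\ 0 \notin Phi,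
      (forall a b, a \in Phi -> b \in Phi -> b *m refl a \in Phi),
      (forall a b, a \in Phi -> b \in Phi -> exists z : int, cartan b a = z%:~R)
    & (forall a (c : R), a \in Phi -> c *: a \in Phi -> c = 1 \/ c = -1)].

Definition pos_comb (Delta : seq V) (b : V) : Prop :=
  exists c : 'I_(size Delta) -> nat, b = \sum_(i < size Delta) (c i)%:R *: Delta`_i.

Definition root_basis (Phi Delta : seq V) : Prop :=
  [/\ {subset Delta <= Phi}, free Delta
    & forall b, b \in Phi -> pos_comb Delta b \/ pos_comb Delta (- b)].

Definition posroot (Phi Delta : seq V) (b : V) : Prop :=
  b \in Phi /\ pos_comb Delta b.

Definition posind (Phi Delta : seq V) (b : V) : R :=
  if excluded_middle_informative (posroot Phi Delta b) then 1 else 0.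

(* the Weyl group: matrices of products of reflections s_a, a in Phi
   (w acts on v by v |-> v *m w; the composite s_a o w has matrix w *m refl a) *)
Inductive inW (Phi : seq V) : 'M[R]_n -> Prop :=
  | inW1 : inW Phi 1%:M
  | inWr : forall w a, inW Phi w -> a \in Phi -> inW Phi (w *m refl a).

(* connectedness for the decomposition into irreducible components:
   reflexive-transitive closure of non-orthogonality on Phi *)
Inductive conn (Phi : seq V) : V -> V -> Prop :=
  | conn_refl : forall a, conn Phi a a
  | conn_step : forall a b c, conn Phi a b -> b \in Phi -> c \in Phi ->
                  dot b c != 0 -> conn Phi a c.

Definition highest_root (Phi Delta : seq V) (theta : V) : Prop :=
  theta \in Phi /\
  forall b, b \in Phi -> conn Phi theta b -> pos_comb Delta (theta - b).

Definition simple_affine (Phi Delta : seq V) (a : V) (k : int) : Prop :=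
  (a \in Delta /\ k = 0) \/ (k = 1 /\ highest_root Phi Delta (- a)).

(* X_* : zmodType X with coroot embedding cv and pairing pr : X -> V -> R,
   additive in X and R-linear in V (the R-linear extension of the
   Z-bilinear pairing X_* x ZPhi -> Z), integral on roots, extending the
   coroot-root pairing; cv extends to a group morphism Z Phi^vee -> X *)
Definition cochar_datum (Phi : seq V) (X : zmodType) (cv : V -> X)
    (pr : X -> V -> R) : Prop :=
  [/\ (forall mu nu v, pr (mu + nu) v = pr mu v + pr nu v),
      (forall mu (c : R) u v, pr mu (c *: u + v) = c * pr mu u + pr mu v),
      (forall mu b, b \in Phi -> exists z : int, pr mu b = z%:~R),
      (forall a b, a \in Phi -> b \in Phi -> pr (cv a) b = cartan b a)
    & (forall c : 'I_(size Phi) -> int,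
         \sum_(i < size Phi) coroot Phi`_i *~ c i = 0 ->
         \sum_(i < size Phi) cv Phi`_i *~ c i = 0)].

(* l(x, b) for x = w eps^mu *)
Definition ell (Phi Delta : seq V) (X : zmodType) (pr : X -> V -> R)
    (w : 'M[R]_n) (mu : X) (b : V) : R :=
  pr mu b + posind Phi Delta b - posind Phi Delta (b *m w).

Definition LP (Phi Delta : seq V) (X : zmodType) (pr : X -> V -> R)
    (w : 'M[R]_n) (mu : X) (v : 'M[R]_n) : Prop :=
  inW Phi v /\
  forall b, posroot Phi Delta b -> 0 <= ell Phi Delta pr w mu (b *m v).

End RootSystems.

(* Roots act on the right: [b *m v] is v(b) and [v *m refl a] is s_a v.
   Let b > 0 and g := v(b).  If v^-1(s_a g) > 0 then ell(x, s_a g) >= 0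
   because v is length positive.  Otherwise, since v^-1 a > 0, the integer
   m := <g, a^vee> is positive and h := m a - g = - s_a g is the image under v
   of a positive root, so ell(x, h) >= 0.  As <mu, .> is linear and
   ell(x, a) = 0, ell(x, g) + ell(x, h) only involves the indicators Phi^+;
   a sign analysis shows it is <= 0, using that a multiple of a simple root a
   is a sum of two positive roots only as a + a, resp. that the highest root
   theta satisfies theta >= c for every root c not orthogonal to it.  Hence
   ell(x, s_a g) = - ell(x, h) >= ell(x, g) >= 0. *)

From Pilot Require Import Defs.
From HB Require Import structures.
From mathcomp Require Import all_boot all_order all_algebra.
From mathcomp Require Import ring lra.
From Stdlib Require Import ClassicalDescription.
Import Order.TTheory GRing.Theory Num.Theory.
Local Open Scope ring_scope.
Set Implicit Arguments. Unset Strict Implicit.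

Section Euclidean.
Variables (R : realFieldType) (n : nat).
Implicit Types (a b u v : 'rV[R]_n).

Lemma dotC u v : dot u v = dot v u.
Proof. by rewrite /dot -[u *m v^T]trmxK trmx_mul trmxK [in LHS]mxE. Qed.

Lemma dotNl u v : dot (- u) v = - dot u v.
Proof. by rewrite /dot mulNmx mxE. Qed.

Lemma dotBl u v b : dot (u - b) v = dot u v - dot b v.
Proof. by rewrite /dot mulmxBl !mxE. Qed.

Lemma dotZl c u v : dot (c *: u) v = c * dot u v.
Proof. by rewrite /dot -scalemxAl mxE. Qed.

Lemma dotrr_neq0 b : b != 0 -> dot b b != 0.
Proof.
apply: contra_neq; rewrite /dot mxE => bb0; apply/rowP => j; rewrite mxE.
have sq_ge0 i : true -> 0 <= b 0 i * b^T i 0 by rewrite mxE -expr2 sqr_ge0.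
by have /eqP := @psumr_eq0P _ _ _ _ sq_ge0 bb0 j isT; rewrite mxE -expr2 sqrf_eq0 => /eqP.
Qed.

Lemma mul_refl a b : b *m refl a = b - cartan b a *: a.
Proof.
rewrite /refl mulmxBr mulmx1 -scalemxAr mulmxA [b *m a^T]mx11_scalar.
by rewrite mul_scalar_mx scalerA /cartan /dot mulrAC.
Qed.

Lemma dot_refl a b : a != 0 -> dot (b *m refl a) a = - dot b a.
Proof.
by move=> a0; rewrite mul_refl dotBl dotZl /cartan mulfVK ?dotrr_neq0 //; ring.
Qed.

Lemma cartan_refl a b : a != 0 -> cartan (b *m refl a) a = - cartan b a.
Proof. by move=> a0; rewrite /cartan dot_refl // mulrN mulNr. Qed.

Lemma mul_reflK a : a != 0 -> refl a *m refl a = 1%:M.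
Proof.
move=> a0; apply/row_matrixP => i; rewrite row_mul.
have -> : row i (refl a) = row i 1%:M *m refl a by rewrite -row_mul mul1mx.
by rewrite [LHS]mul_refl cartan_refl // mul_refl scaleNr opprK subrK.
Qed.

End Euclidean.

Section PositiveCombinations.
Variables (R : realFieldType) (n : nat) (Delta : seq 'rV[R]_n).
Implicit Types (a x y : 'rV[R]_n).
Local Notation pos := (pos_comb Delta).

Lemma pos_combD x y : pos x -> pos y -> pos (x + y).
Proof.
move=> [c ->] [d ->]; exists (fun i => (c i + d i)%N).
by rewrite -big_split; apply: eq_bigr => i _; rewrite natrD scalerDl.
Qed.

Lemma pos_combZn (m : nat) x : pos x -> pos (m%:R *: x).
Proof.
move=> [c ->]; exists (fun i => (m * c i)%N).
by rewrite scaler_sumr; apply: eq_bigr => i _; rewrite natrM scalerA.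
Qed.

Lemma pos_comb_mem a : a \in Delta -> pos a.
Proof.
move=> aD; pose j := Ordinal (etrans (index_mem a Delta) aD).
exists (fun i => (i == j : nat)); rewrite (bigD1 j) //= eqxx scale1r nth_index //.
by rewrite big1 ?addr0 // => i /negbTE ->; rewrite scale0r.
Qed.

Hypothesis Delta_free : free Delta.

Lemma pos_comb_add_eq0 x y : pos x -> pos y -> x + y = 0 -> x = 0.
Proof.
move=> [c Dx] [d Dy] xy0.
have /freeP Dfree : free (in_tuple Delta) by [].
have cd0 : forall i, (c i + d i)%:R = 0 :> R.
  apply: Dfree; under eq_bigr do rewrite natrD scalerDl.
  by rewrite big_split /= -Dx -Dy.
rewrite Dx big1 // => i _; move/eqP: (cd0 i).
by rewrite pnatr_eq0 addn_eq0 => /andP[/eqP -> _]; rewrite scale0r.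
Qed.

Lemma pos_comb_anti x : pos x -> pos (- x) -> x = 0.
Proof. by move=> px pNx; apply: pos_comb_add_eq0 px pNx _; rewrite subrr. Qed.

Lemma pos_comb_add_simple a x y (m : nat) : a \in Delta ->
  pos x -> pos y -> x + y = m%:R *: a -> exists c : nat, x = c%:R *: a.
Proof.
move=> aD [c Dx] [d Dy] xy_ma; pose j := Ordinal (etrans (index_mem a Delta) aD).
have Dj : Delta`_j = a := nth_index 0 aD.
have /freeP Dfree : free (in_tuple Delta) by [].
have cd_eq : forall i, (c i + d i)%:R - (i == j)%:R * m%:R = 0 :> R.
  apply: Dfree; under eq_bigr do rewrite scalerBl natrD scalerDl.
  rewrite sumrB big_split /= -Dx -Dy xy_ma (bigD1 j) //= eqxx mul1r Dj big1 ?addr0 ?subrr //.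
  by move=> i /negbTE ->; rewrite mul0r scale0r.
exists (c j); rewrite Dx (bigD1 j) //= Dj big1 ?addr0 // => i /negbTE ij.
move/eqP: (cd_eq i); rewrite ij mul0r subr0 pnatr_eq0 addn_eq0 => /andP[/eqP -> _].
by rewrite scale0r.
Qed.

Lemma pos_comb_subz_gt0 x y (z : int) : pos x -> pos y ->
  pos (- (x - z%:~R *: y)) -> x - z%:~R *: y != 0 -> 0 < z.
Proof.
move=> px py pN xy0; rewrite ltNge; apply/negP => z_le0.
have [m zm] : exists m : nat, z = - m%:Z by exists `|z|%N; rewrite lez0_abs ?opprK.
move: pN xy0; rewrite zm mulrNz scaleNr opprK => pN /eqP; apply.
exact: (pos_comb_anti (pos_combD px (pos_combZn m py)) pN).
Qed.

End PositiveCombinations.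

Section RootSystem.
Variables (R : realFieldType) (n : nat) (Phi Delta : seq 'rV[R]_n).
Hypotheses (Phi_root : root_system Phi) (Delta_basis : root_basis Phi Delta).
Implicit Types (a b x y z : 'rV[R]_n) (u w : 'M[R]_n).
Local Notation pos := (pos_comb Delta).

Let Delta_sub : {subset Delta <= Phi}. Proof. by case: Delta_basis. Qed.
Let Delta_free : free Delta. Proof. by case: Delta_basis. Qed.

Lemma root_neq0 b : b \in Phi -> b != 0.
Proof. by case: Phi_root => Phi0 _ _ _ bPhi; apply: contraNneq Phi0 => <-. Qed.

Lemma root_refl a b : a \in Phi -> b \in Phi -> b *m refl a \in Phi.
Proof. by case: Phi_root => _ Phi_refl _ _; apply: Phi_refl. Qed.

Lemma rootN b : b \in Phi -> - b \in Phi.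
Proof.
move=> bPhi; have := root_refl bPhi bPhi; rewrite mul_refl /cartan.
by rewrite mulfK ?dotrr_neq0 ?root_neq0 // scaler_nat mulr2n opprD addrA subrr sub0r.
Qed.

Lemma root_sign b : b \in Phi -> pos b \/ pos (- b).
Proof. by case: Delta_basis => _ _; apply. Qed.

Lemma root_not_pos_opp b : b \in Phi -> pos b -> ~ pos (- b).
Proof.
move=> bPhi pb pNb.
by move/eqP: (root_neq0 bPhi); rewrite (pos_comb_anti Delta_free pb pNb).
Qed.

Lemma inW_root w b : inW Phi w -> b \in Phi -> b *m w \in Phi.
Proof.
move=> Ww bPhi; elim: Ww => [|w' a _ IH aPhi]; first by rewrite mulmx1.
by rewrite mulmxA root_refl.
Qed.

Lemma inW_refl a : a \in Phi -> inW Phi (refl a).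
Proof. by move=> aPhi; rewrite -[refl a]mul1mx; apply: inWr (inW1 _) aPhi. Qed.

Lemma inW_mul u w : inW Phi u -> inW Phi w -> inW Phi (u *m w).
Proof.
move=> Wu; elim=> [|w' a _ IH aPhi]; first by rewrite mulmx1.
by rewrite mulmxA; apply: inWr.
Qed.

Lemma inW_rinv w : inW Phi w -> exists2 u, inW Phi u & w *m u = 1%:M.
Proof.
elim=> [|w' a _ [u Wu w'u1] aPhi]; first by exists 1%:M; [apply: inW1 | rewrite mulmx1].
exists (refl a *m u); first by apply: inW_mul; [apply: inW_refl |].
by rewrite mulmxA -(mulmxA w') mul_reflK ?root_neq0 // mulmx1.
Qed.

Lemma inW_unitmx w : inW Phi w -> w \in unitmx.
Proof. by case/inW_rinv=> u _ /mulmx1_unit[]. Qed.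

Lemma inW_invmx w : inW Phi w -> inW Phi (invmx w).
Proof.
move=> Ww; have [u Wu wu1] := inW_rinv Ww.
by rewrite -[invmx w]mulmx1 -wu1 mulmxA mulVmx ?mul1mx ?inW_unitmx.
Qed.

Variant posind_spec b : R -> Prop :=
  | PosindPos of pos b : posind_spec b 1
  | PosindNeg of pos (- b) & ~ pos b : posind_spec b 0.

Lemma posindP b : b \in Phi -> posind_spec b (posind Phi Delta b).
Proof.
rewrite /posind => bPhi; destruct excluded_middle_informative as [pb|Nb].
  exact: PosindPos (proj2 pb).
by have [pb|pNb] := root_sign bPhi; [case: Nb | apply: PosindNeg => // pb; case: Nb].
Qed.

Lemma posind_ge0 b : 0 <= posind Phi Delta b.
Proof. by rewrite /posind; destruct excluded_middle_informative. Qed.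

Lemma posind_le1 b : posind Phi Delta b <= 1.
Proof. by rewrite /posind; destruct excluded_middle_informative. Qed.

Lemma posind_eq0 b : b \in Phi -> pos (- b) -> posind Phi Delta b = 0.
Proof. by move=> bPhi pNb; case: (posindP bPhi) => // pb; case: (root_not_pos_opp bPhi pb). Qed.

Lemma posind_pos b : b \in Phi -> pos b -> posind Phi Delta b = 1.
Proof. by move=> bPhi pb; case: (posindP bPhi) => // _ []. Qed.

Lemma posindN b : b \in Phi -> posind Phi Delta (- b) = 1 - posind Phi Delta b.
Proof.
move=> bPhi; have NbPhi := rootN bPhi.
case: (posindP bPhi) => [pb|pNb _]; first by rewrite posind_eq0 ?subrr ?opprK.
by case: (posindP NbPhi) => [|_ /(_ pNb)[]]; rewrite subr0.
Qed.

Lemma posind_add_ge1 x y z (m : nat) : x \in Phi -> y \in Phi -> z \in Phi ->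
  (0 < m)%N -> x + y = m%:R *: z -> pos z -> 1 <= posind Phi Delta x + posind Phi Delta y.
Proof.
move=> xPhi yPhi zPhi m_gt0 xy_mz pz.
case: (posindP xPhi) => [_|pNx _]; first by rewrite lerDl posind_ge0.
case: (posindP yPhi) => [_|pNy _]; first by rewrite add0r.
have pNmz : pos (- (m%:R *: z)) by rewrite -xy_mz opprD; apply: pos_combD.
have /eqP := pos_comb_anti Delta_free (pos_combZn m pz) pNmz.
by rewrite scaler_eq0 pnatr_eq0 (negbTE (root_neq0 zPhi)) orbF eqn0Ngt m_gt0.
Qed.

Lemma highest_root_sub theta b : highest_root Phi Delta theta ->
  b \in Phi -> dot theta b != 0 -> pos (theta - b).
Proof.
case=> thPhi th_max bPhi thb; apply: th_max => //.
exact: conn_step (conn_refl _ _) thPhi bPhi thb.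
Qed.

Lemma highest_root_pos theta : highest_root Phi Delta theta -> pos theta.
Proof.
move=> th_high; have thPhi := th_high.1.
have [//|pNth] := root_sign thPhi.
have p2th : pos (theta - - theta).
  apply: (highest_root_sub th_high (rootN thPhi)).
  by rewrite dotC dotNl oppr_eq0 dotrr_neq0 ?root_neq0.
have : theta - - theta = 0.
  apply: (pos_comb_add_eq0 Delta_free p2th (pos_combD pNth pNth)).
  by rewrite opprK addrACA !subrr addr0.
rewrite opprK -mulr2n -scaler_nat => /eqP; rewrite scaler_eq0 pnatr_eq0 /=.
by rewrite (negbTE (root_neq0 thPhi)).
Qed.

Lemma highest_root_add a b : highest_root Phi Delta (- a) ->
  b \in Phi -> dot b a != 0 -> pos (b - a).
Proof.
move=> a_high bPhi ba0; have -> : b - a = - a - - b by rewrite opprK addrC.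
by apply: (highest_root_sub a_high (rootN bPhi)); rewrite dotNl dotC dotNl opprK.
Qed.

Lemma highest_root_add_neg a x y (m : nat) : highest_root Phi Delta (- a) ->
  y \in Phi -> dot y a != 0 -> x + y = m.+1%:R *: a -> pos (- x).
Proof.
move=> a_high yPhi ya0 xy_ma; have -> : - x = (y - a) + m%:R *: - a.
  rewrite -[x](addrK y) xy_ma; apply/rowP => i; rewrite !mxE -addn1 natrD; ring.
exact: pos_combD (highest_root_add a_high yPhi ya0) (pos_combZn m (highest_root_pos a_high)).
Qed.

Lemma highest_root_add_eq a x y (m : nat) : highest_root Phi Delta (- a) ->
  x \in Phi -> y \in Phi -> dot x a != 0 -> dot y a != 0 -> x + y = m.+2%:R *: a -> x = a.
Proof.
move=> a_high xPhi yPhi xa0 ya0 xy_ma; apply/eqP; rewrite -subr_eq0; apply/eqP.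
apply: (pos_comb_add_eq0 Delta_free (highest_root_add a_high xPhi xa0)).
  exact: pos_combD (highest_root_add a_high yPhi ya0) (pos_combZn m (highest_root_pos a_high)).
rewrite -[x](addrK y) xy_ma; apply/rowP => i; rewrite !mxE -addn2 natrD; ring.
Qed.

Lemma root_add_simple a x y (m : nat) : a \in Delta -> x \in Phi ->
  pos x -> pos y -> x + y = m%:R *: a -> x = a.
Proof.
move=> aD xPhi px py xy_ma; have [c Dx] := pos_comb_add_simple Delta_free aD px py xy_ma.
case: Phi_root => _ _ _ /(_ a c%:R (Delta_sub aD)); rewrite -Dx => /(_ xPhi) [c1|cN1].
  by rewrite Dx c1 scale1r.
by have := ler0n R c; rewrite cN1 ler0N1.
Qed.

Lemma simple_affine_root a (k : int) : simple_affine Phi Delta a k -> a \in Phi.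
Proof.
by case=> [[/Delta_sub //]|[_ [NaPhi _]]]; rewrite -[a]opprK rootN.
Qed.

Section Length.
Variables (X : zmodType) (pr : X -> 'rV[R]_n -> R) (w : 'M[R]_n) (mu : X).
Hypothesis pr_linear : forall c x y, pr mu (c *: x + y) = c * pr mu x + pr mu y.
Hypothesis w_W : inW Phi w.
Local Notation ell := (ell Phi Delta pr w mu).
Local Notation posind := (posind Phi Delta).

Lemma pr0 : pr mu 0 = 0.
Proof. by apply: (@addrI _ (pr mu 0)); rewrite addr0 -{1}[pr mu 0]mul1r -pr_linear scale1r addr0. Qed.

Lemma prZ c x : pr mu (c *: x) = c * pr mu x.
Proof. by rewrite -[c *: x]addr0 pr_linear pr0 addr0. Qed.

Lemma prD x y : pr mu (x + y) = pr mu x + pr mu y.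
Proof. by have := pr_linear 1 x y; rewrite scale1r mul1r. Qed.

Lemma prN x : pr mu (- x) = - pr mu x.
Proof. by rewrite -scaleN1r prZ mulN1r. Qed.

Lemma ellN b : b \in Phi -> ell (- b) = - ell b.
Proof.
by move=> bPhi; rewrite /Defs.ell mulNmx prN !posindN ?inW_root //; ring.
Qed.

Lemma ell_add_scale a g h (c : R) : ell a = 0 -> g + h = c *: a ->
  ell g + ell h = posind g - posind (g *m w) + (posind h - posind (h *m w))
                  - c * (posind a - posind (a *m w)).
Proof.
rewrite /Defs.ell => ella gh_ca.
have pr_a : pr mu a = - (posind a - posind (a *m w)) by lra.
have pr_gh : pr mu g + pr mu h = - c * (posind a - posind (a *m w)).
  by rewrite -prD gh_ca prZ pr_a mulrN mulNr.
lra.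
Qed.

Lemma posind_mul_add_ge1 a g h (m : nat) : a \in Phi -> g \in Phi -> h \in Phi ->
  (0 < m)%N -> g + h = m%:R *: a -> pos (a *m w) ->
  1 <= posind (g *m w) + posind (h *m w).
Proof.
move=> aPhi gPhi hPhi m_gt0 gh_ma; apply: posind_add_ge1 m_gt0 _; rewrite ?inW_root //.
by rewrite -mulmxDl gh_ma scalemxAl.
Qed.

Lemma ell_add_simple_le0 a g h (m : nat) : a \in Delta -> ell a = 0 ->
  g \in Phi -> h \in Phi -> (0 < m)%N -> g + h = m%:R *: a -> ell g + ell h <= 0.
Proof.
move=> aD ella gPhi hPhi m_gt0 gh_ma.
have [[-> ->]|gh_le1] : (g = a /\ h = a) \/ posind g + posind h <= 1.
    case: (posindP gPhi) => [pg|_ _]; case: (posindP hPhi) => [ph|_ _]; try by right; lra.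
    left; split; first exact: root_add_simple aD gPhi pg ph gh_ma.
    by apply: root_add_simple aD hPhi ph pg _; rewrite addrC gh_ma.
  by rewrite ella addr0.
have aPhi := Delta_sub aD.
rewrite (ell_add_scale ella gh_ma) (posind_pos aPhi (pos_comb_mem aD)).
move: (posind_ge0 (g *m w)) (posind_ge0 (h *m w)) (posind_le1 (g *m w)) (posind_le1 (h *m w)).
have m_ge1 : 1 <= m%:R :> R by rewrite ler1n.
case: (posindP (inW_root w_W aPhi)) => [paw|_ _]; last by lra.
have := posind_mul_add_ge1 aPhi gPhi hPhi m_gt0 gh_ma paw.
rewrite subrr mulr0; lra.
Qed.

Lemma ell_add_highest_le0 a g h (m : nat) : highest_root Phi Delta (- a) -> ell a = 0 ->
  g \in Phi -> h \in Phi -> (0 < m)%N -> g + h = m%:R *: a ->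
  dot g a != 0 -> dot h a != 0 -> ell g + ell h <= 0.
Proof.
move=> a_high ella gPhi hPhi m_gt0 gh_ma ga0 ha0.
have aPhi : a \in Phi by rewrite -[a]opprK rootN // a_high.1.
case: m m_gt0 gh_ma => [//|[_ gh_a|m _ gh_ma]]; last first.
  have hg_ma : h + g = m.+2%:R *: a by rewrite addrC.
  rewrite (highest_root_add_eq a_high gPhi hPhi ga0 ha0 gh_ma).
  by rewrite (highest_root_add_eq a_high hPhi gPhi ha0 ga0 hg_ma) ella addr0.
have hg_a : h + g = 1%:R *: a by rewrite addrC.
rewrite (ell_add_scale ella gh_a) (posind_eq0 aPhi (highest_root_pos a_high)).
rewrite (posind_eq0 gPhi (highest_root_add_neg a_high hPhi ha0 gh_a)).
rewrite (posind_eq0 hPhi (highest_root_add_neg a_high gPhi ga0 hg_a)) mulr1n.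
move: (posind_ge0 (g *m w)) (posind_ge0 (h *m w)).
case: (posindP (inW_root w_W aPhi)) => [paw|_ _]; last by lra.
by have := posind_mul_add_ge1 (m := 1) aPhi gPhi hPhi isT gh_a paw; lra.
Qed.

Lemma ell_add_le0 a (k : int) g h (m : nat) : simple_affine Phi Delta a k -> ell a = 0 ->
  g \in Phi -> h \in Phi -> (0 < m)%N -> g + h = m%:R *: a ->
  dot g a != 0 -> dot h a != 0 -> ell g + ell h <= 0.
Proof.
case=> [[aD _]|[_ a_high]] ella gPhi hPhi m_gt0 gh_ma ga0 ha0.
  exact: ell_add_simple_le0 aD ella gPhi hPhi m_gt0 gh_ma.
exact: ell_add_highest_le0 a_high ella gPhi hPhi m_gt0 gh_ma ga0 ha0.
Qed.

Lemma ell_mul_refl_ge0 v a (k : int) b : LP Phi Delta pr w mu v ->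
  simple_affine Phi Delta a k -> ell a = 0 -> pos (a *m invmx v) ->
  posroot Phi Delta b -> 0 <= ell (b *m v *m refl a).
Proof.
move=> [Wv v_LP] a_simple ella pau [bPhi pb].
have aPhi := simple_affine_root a_simple; have a0 := root_neq0 aPhi.
set g := b *m v; have gPhi : g \in Phi by rewrite inW_root.
have sg_v : g *m refl a = g *m refl a *m invmx v *m v by rewrite mulmxKV ?inW_unitmx.
have sguPhi : g *m refl a *m invmx v \in Phi.
  by apply: inW_root; [apply: inW_invmx | apply: root_refl].
have [psgu|pNsgu] := root_sign sguPhi; first by rewrite sg_v; apply: v_LP.
have sgu_b : g *m refl a *m invmx v = b - cartan g a *: (a *m invmx v).
  by rewrite mul_refl mulmxBl -scalemxAl /g mulmxK ?inW_unitmx.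
have [m m_gt0 cga] : exists2 m : nat, (0 < m)%N & cartan g a = m%:R.
  have [z cgaz] : exists z : int, cartan g a = z%:~R by case: Phi_root => _ _ + _; apply.
  have : 0 < z by apply: (pos_comb_subz_gt0 Delta_free pb pau); rewrite -cgaz -sgu_b ?root_neq0.
  by case: z cgaz => // m cgaz; exists m.
set h := m%:R *: a - g.
have h_sg : h = - (g *m refl a) by rewrite mul_refl cga opprB.
have ga0 : dot g a != 0.
  by apply/eqP => ga0; move: m_gt0; rewrite -(ltr0n R) -cga /cartan ga0 mulr0 mul0r ltxx.
have ha0 : dot h a != 0 by rewrite h_sg dotNl dot_refl // opprK.
have hPhi : h \in Phi by rewrite h_sg rootN ?root_refl.
have ell_h : 0 <= ell h.
  by rewrite h_sg sg_v -mulNmx; apply: v_LP; split; rewrite ?rootN.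
have gh_ma : g + h = m%:R *: a by rewrite addrC subrK.
have := ell_add_le0 a_simple ella gPhi hPhi m_gt0 gh_ma ga0 ha0.
have := v_LP b (conj bPhi pb).
by rewrite -[g *m refl a]opprK -h_sg ellN //; lra.
Qed.

End Length.

End RootSystem.

Unset Implicit Arguments.

Theorem corollary4p6 (R : realFieldType) (n : nat) (Phi Delta : seq 'rV[R]_n)
    (X : zmodType) (cv : 'rV[R]_n -> X) (pr : X -> 'rV[R]_n -> R)
    (w : 'M[R]_n) (mu : X) (v : 'M[R]_n) (a : 'rV[R]_n) (k : int) :
  root_system Phi -> root_basis Phi Delta -> cochar_datum Phi cv pr ->
  inW Phi w ->
  LP Phi Delta pr w mu v ->
  simple_affine Phi Delta a k ->
  ell Phi Delta pr w mu a = 0 ->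
  posroot Phi Delta (a *m invmx v) ->
  LP Phi Delta pr w mu (v *m refl a).
Proof.
move=> Phi_root Delta_basis [_ pr_linear _ _ _] Ww v_LP a_simple ella [_ pau].
split; first exact: inWr v_LP.1 (simple_affine_root Phi_root Delta_basis a_simple).
move=> b pb; rewrite mulmxA.
exact: (ell_mul_refl_ge0 Phi_root Delta_basis (pr_linear mu) Ww v_LP a_simple ella pau pb).
Qed.
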